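(* Let $A=k_{p_{ij}}[x_1,\dots,x_n]$ and let $\theta$ be a reflection of $A$. Then there exist an elementary transformation $g$ of $A$, an index $i\in[n]$ and a scalar $\lambda\in k^\times$, $\lambda\ne1$, such that $g^{-1}\theta g=\theta_{i,\lambda}$.
   Context: $k$ is an algebraically closed field of characteristic zero, $n\ge2$, $[n]=\{1,\dots,n\}$. $A=k_{p_{ij}}[x_1,\dots,x_n]$ is the $k$-algebra generated by $x_1,\dots,x_n$ with relations $x_jx_i=p_{ij}x_ix_j$ ($i<j$), nonzero $p_{ij}\in k$, $\deg x_i=1$; set $p_{ii}=1$, $p_{ij}=p_{ji}^{-1}$ for $i>j$. $\mathrm{Aut}(A)$ is the group of graded algebra automorphisms. For $g\in\mathrm{Aut}(A)$, $Tr_A(g,t)=\sum_i\mathrm{tr}(g|_{A_i})t^i$; $g$ is a quasi-reflection if $Tr_A(g,t)=\frac{1}{(1-t)^{n-1}(1-\lambda t)}$ for some $\lambda\ne1$. A reflection of $A$ is a quasi-reflection $g$ of finite order for which there is a basis $y_1,\dots,y_n$ of $A_1$ with $g(y_j)=y_j$ for $j\le n-1$ and $g(y_n)=\lambda y_n$. The block of $i$ is $B(i)=\{i': p_{ij}=p_{i'j}\ \forall j\}$. An elementary transformation is a graded automorphism $\theta$ of $A$ with $\theta(x_i)=x'_i$ ($i\in[n]$) where, for each block $B_w$, $\{x'_i: i\in B_w\}$ is any basis of $\bigoplus_{i\in B_w}kx_i$ (every such choice defines an automorphism). For $s\in[n]$ and $\lambda\ne 0,1$, the standard reflection $\theta_{s,\lambda}$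 is the automorphism with $\theta_{s,\lambda}(x_s)=\lambda x_s$ and $\theta_{s,\lambda}(x_i)=x_i$ for $i\ne s$. *)

From HB Require Import structures.
From mathcomp Require Import all_boot all_order all_algebra.
Set Implicit Arguments. Unset Strict Implicit. Unset Printing Implicit Defensive.
Import Order.TTheory GRing.Theory Num.Theory.
Local Open Scope ring_scope.

(* ------------------------------------------------------------------------
   The skew polynomial ring A = k_{p_ij}[x_1,...,x_n] (indices 0..n-1 here).
   The parameters are stored in a matrix p : 'M[k]_n with p i j = p_ij,
   p_ii = 1, p_ij = p_ji^{-1}, all nonzero; relations x_j x_i = p_ij x_i x_j.

   A_d has the PBW basis of ordered monomials x^w = x_{w 0} ... x_{w (d-1)}
   with w a nondecreasing word of length d.  A word u of length d gives
   x_{u 0}...x_{u (d-1)} = skew_coef p u * x^{sort u}, where skew_coef is the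
   product of p_{u b, u a} over inversions a < b, u a > u b
   (since x_i x_j = p_{ji} x_j x_i).

   A graded automorphism g is recorded by its degree-one matrix M:
   g(x_j) = \sum_i M i j x_i  (column j = image of x_j); composition of
   automorphisms is matrix product.
   ------------------------------------------------------------------------ *)

Definition skew_params (k : fieldType) (n : nat) (p : 'M[k]_n) : Prop :=
  (forall i j, p i j != 0) /\ (forall i, p i i = 1) /\
  (forall i j, p i j * p j i = 1).

Definition word (n d : nat) := {ffun 'I_d -> 'I_n}.

Definition sorted_word (n d : nat) (w : word n d) : bool :=
  [forall a : 'I_d, forall b : 'I_d, (a <= b)%N ==> (w a <= w b)%N].

Definition same_content (n d : nat) (u w : word n d) : bool :=
  [forall i : 'I_n, #|[set a | u a == i]| == #|[set a | w a == i]|].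

Definition skew_coef (k : fieldType) (n d : nat) (p : 'M[k]_n) (u : word n d) : k :=
  \prod_(a < d) \prod_(b < d | (a < b)%N && (u b < u a)%N) p (u b) (u a).

(* coefficient of the ordered monomial x^w (w sorted) in g(x_{v 0} ... x_{v (d-1)}),
   where g has degree-one matrix M *)
Definition act_coef (k : fieldType) (n d : nat) (p : 'M[k]_n) (M : 'M[k]_n)
  (v w : word n d) : k :=
  \sum_(u : word n d | same_content u w) skew_coef p u * \prod_(a < d) M (u a) (v a).

Definition trace_deg (k : fieldType) (n : nat) (p : 'M[k]_n) (M : 'M[k]_n) (d : nat) : k :=
  \sum_(w : word n d | sorted_word w) act_coef p M w w.

Definition pairw (n : nat) (i j : 'I_n) : word n 2 :=
  [ffun a : 'I_2 => if val a == 0%N then i else j].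

(* M is the degree-one part of a graded algebra automorphism of A:
   M invertible and g(x_j) g(x_i) = p_ij g(x_i) g(x_j) in A_2 for all i, j *)
Definition is_aut (k : fieldType) (n : nat) (p : 'M[k]_n) (M : 'M[k]_n) : Prop :=
  M \in unitmx /\
  forall (i j : 'I_n) (w : word n 2), sorted_word w ->
    act_coef p M (pairw j i) w = p i j * act_coef p M (pairw i j) w.

(* coefficient of t^d in 1 / ((1-t)^(n-1) (1 - lam t)) *)
Definition qr_series_coef (k : fieldType) (n : nat) (lam : k) (d : nat) : k :=
  \sum_(j < d.+1) lam ^+ j * ('C(d - j + (n - 2), n - 2))%:R.

Definition quasi_reflection_with (k : fieldType) (n : nat) (p : 'M[k]_n)
  (M : 'M[k]_n) (lam : k) : Prop :=
  is_aut p M /\ lam != 1 /\ forall d : nat, trace_deg p M d = qr_series_coef n lam d.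

Definition is_reflection (k : fieldType) (n : nat) (p : 'M[k]_n) (M : 'M[k]_n) : Prop :=
  exists lam : k,
    quasi_reflection_with p M lam /\
    (exists m : nat, (0 < m)%N /\ M ^+ m = 1%:M) /\
    (exists P : 'M[k]_n, P \in unitmx /\
       M *m P = P *m diag_mx (\row_(j < n) if (val j == n.-1)%N then lam else 1)).

(* elementary transformation: a graded automorphism mapping each
   span{x_i : i in B_w} to itself, i.e. M i j != 0 only if i is in the block of j *)
Definition in_block (k : fieldType) (n : nat) (p : 'M[k]_n) (i j : 'I_n) : Prop :=
  forall l : 'I_n, p i l = p j l.

Definition elementary (k : fieldType) (n : nat) (p : 'M[k]_n) (M : 'M[k]_n) : Prop :=
  is_aut p M /\ forall i j : 'I_n, M i j != 0 -> in_block p i j.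

Definition std_refl (k : fieldType) (n : nat) (s : 'I_n) (lam : k) : 'M[k]_n :=
  diag_mx (\row_(j < n) if j == s then lam else 1).

(* A reflection T is diagonalizable with eigenvalues 1, ..., 1, lam, so T = 1 + c y f^T with
   f^T y = 1 and c = lam - 1.  Being an automorphism means, in degree two,
   T_aj T_bi (1 - p_ij p_ab) = T_bj T_ai (p_ij - p_ab) for all a, b, i, j, and comparing
   tr(T | A_2) with the t^2-coefficient of 1 / ((1 - t)^(n-1) (1 - lam t)) gives
   sum_(a < b) (1 - p_ab) y_a f_a y_b f_b = 0, which excludes the "mystic" case p_ab = -1.
   Together these force all indices in the supports of y and f to commute with each other
   and to lie in a single block.  Hence the eigenbasis y, e_b - (f_b / f_s) e_s (b != s) of T,
   where f_s != 0, is an elementary transformation conjugating T to theta_{s,lam}. *)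

From HB Require Import structures.
From mathcomp Require Import all_boot all_order all_algebra.
From mathcomp Require Import ring.
Import GRing.Theory.
Set Implicit Arguments. Unset Strict Implicit. Unset Printing Implicit Defensive.
Local Open Scope ring_scope.

Local Notation i0 := (@ord0 1).
Local Notation i1 := (@ord_max 1).

Lemma ord2_ind (P : 'I_2 -> Prop) : P i0 -> P i1 -> forall x, P x.
Proof.
move=> P0 P1 [[|[|//]] x].
  by rewrite (_ : Ordinal x = i0) //; apply: val_inj.
by rewrite (_ : Ordinal x = i1) //; apply: val_inj.
Qed.

Section PairWords.

Variables (k : fieldType) (n : nat) (p : 'M[k]_n).

Lemma pairw_fst (a b : 'I_n) : pairw a b i0 = a.
Proof. by rewrite ffunE. Qed.

Lemma pairw_snd (a b : 'I_n) : pairw a b i1 = b.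
Proof. by rewrite ffunE. Qed.

Lemma pairwE (w : word n 2) : w = pairw (w i0) (w i1).
Proof. by apply/ffunP; apply: ord2_ind; rewrite ?pairw_fst ?pairw_snd. Qed.

Lemma eq_pairw (a b c d : 'I_n) : (pairw a b == pairw c d) = (a == c) && (b == d).
Proof.
apply/eqP/andP => [E|[/eqP -> /eqP ->]//].
move/(congr1 (fun w : word n 2 => (w i0, w i1))): E.
by rewrite /= !pairw_fst !pairw_snd => -[-> ->]; rewrite !eqxx.
Qed.

Lemma sorted_pairw (a b : 'I_n) : sorted_word (pairw a b) = (a <= b)%N.
Proof.
apply/forallP/idP => [/(_ i0)/forallP/(_ i1)/implyP|ab].
  by rewrite pairw_fst pairw_snd; apply.
by apply: ord2_ind; apply/forallP; apply: ord2_ind; rewrite ?pairw_fst ?pairw_snd ?leqnn ?ab.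
Qed.

Lemma cards_ord2 (P : pred 'I_2) : #|[set x | P x]| = (P i0 + P i1)%N.
Proof.
rewrite -sum1_card big_mkcond big_ord_recl big_ord_recl big_ord0 /= !inE addn0.
by rewrite (_ : lift i0 ord0 = i1); [case: (P i0); case: (P i1) | apply: val_inj].
Qed.

Lemma same_content_pairw (u : word n 2) (a b : 'I_n) :
  same_content u (pairw a b) = (u == pairw a b) || (u == pairw b a).
Proof.
rewrite [u]pairwE !eq_pairw; move: (u i0) (u i1) => x y.
apply/forallP/idP => [H|]; last first.
  by case/orP=> /andP[/eqP -> /eqP ->] i; rewrite !cards_ord2 !ffunE //= addnC.
have := H b; have := H a; have := H x; rewrite !cards_ord2 !ffunE /= !eqxx => Hx Ha Hb.
case: (eqVneq x a) => [xa|xa].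
  by subst a; move: Hb; rewrite eqn_add2l; case: (y == b).
case: (eqVneq x b) => [xb|xb].
  by subst b; move: Ha; rewrite addnC eqn_add2r; case: (y == a); rewrite ?orbT.
by move: Hx; rewrite [a == x]eq_sym [b == x]eq_sym (negbTE xa) (negbTE xb).
Qed.

Lemma prod_ord2 (F : 'I_2 -> k) : \prod_(x < 2) F x = F i0 * F i1.
Proof.
by rewrite big_ord_recl big_ord_recl big_ord0 mulr1 (_ : lift i0 ord0 = i1) //; apply: val_inj.
Qed.

Lemma skew_coef_pairw (a b : 'I_n) :
  skew_coef p (pairw a b) = if (b < a)%N then p b a else 1.
Proof.
rewrite /skew_coef prod_ord2 [X in _ * X]big_pred0 ?mulr1; last first.
  by apply: ord2_ind; rewrite /= ?ltnn ?andbF.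
rewrite (eq_bigl (fun x : 'I_2 => (x == i1) && (b < a)%N)); last first.
  by apply: ord2_ind; rewrite !ffunE.
case: ltnP => ba; last by rewrite big_pred0 // => x; rewrite andbF.
by rewrite (big_pred1 i1) ?pairw_fst ?pairw_snd // => x; rewrite andbT.
Qed.

Lemma act_coef_pairw_lt (M : 'M[k]_n) (v : word n 2) (a b : 'I_n) : (a < b)%N ->
  act_coef p M v (pairw a b) = M a (v i0) * M b (v i1) + p a b * (M b (v i0) * M a (v i1)).
Proof.
move=> ab; rewrite /act_coef (eq_bigl _ _ (fun u => same_content_pairw u a b)).
have ba : pairw a b != pairw b a by rewrite eq_pairw negb_and neq_ltn ab.
rewrite (bigD1 (pairw a b)) ?eqxx //= (big_pred1 (pairw b a)) => [|u /=].
  by rewrite !prod_ord2 !skew_coef_pairw !pairw_fst !pairw_snd ab ltnNge ltnW //= mul1r.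
case: (eqVneq u (pairw b a)) => [->|_]; first by rewrite eq_sym ba orbT.
by rewrite orbF andbN.
Qed.

Lemma act_coef_pairw_diag (M : 'M[k]_n) (v : word n 2) (a : 'I_n) :
  act_coef p M v (pairw a a) = M a (v i0) * M a (v i1).
Proof.
rewrite /act_coef (big_pred1 (pairw a a)) => [|u]; last by rewrite same_content_pairw orbb.
by rewrite prod_ord2 skew_coef_pairw ltnn mul1r pairw_fst pairw_snd.
Qed.

Lemma sum_sorted_word2 (F : word n 2 -> k) :
  \sum_(w : word n 2 | sorted_word w) F w =
  \sum_(a : 'I_n) \sum_(b : 'I_n | (a <= b)%N) F (pairw a b).
Proof.
rewrite (reindex (fun ab : 'I_n * 'I_n => pairw ab.1 ab.2)); last first.
  apply: onW_bij; exists (fun w : word n 2 => (w i0, w i1)) => [[a b]|w] /=.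
    by rewrite pairw_fst pairw_snd.
  by rewrite -pairwE.
rewrite pair_big_dep /=.
by apply: eq_bigl => -[a b]; rewrite sorted_pairw.
Qed.

End PairWords.

Lemma eq_of_subr_scaled (k : fieldType) (e u v x y : k) :
  x - y = e * (u - v) -> u = v -> x = y.
Proof. by move=> H E; apply/eqP; rewrite -subr_eq0 H E subrr mulr0. Qed.

(* The coefficient of x_a x_b (a < b) in g(x_j) g(x_i) - p_ij g(x_i) g(x_j), rearranged; the
   cases a > b and a = b give the same identity (the latter up to a factor 2). *)
Definition aut_identity (k : fieldType) (n : nat) (p M : 'M[k]_n) : Prop :=
  forall a b i j : 'I_n,
    M a j * M b i * (1 - p i j * p a b) = M b j * M a i * (p i j - p a b).

Section AutomorphismIdentity.

Variables (k : fieldType) (n : nat) (p : 'M[k]_n).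
Hypothesis hp : skew_params p.

Let p_neq0 : forall i j, p i j != 0 := hp.1.
Let p_diag : forall i, p i i = 1 := hp.2.1.
Let p_mulC : forall i j, p i j * p j i = 1 := hp.2.2.

Lemma skew_eq1_sym i j : p i j = 1 -> p j i = 1.
Proof. by move=> pij; rewrite -[LHS]mul1r -pij p_mulC. Qed.

Lemma is_autP (M : 'M[k]_n) : (2 : k) != 0 ->
  is_aut p M <-> M \in unitmx /\ aut_identity p M.
Proof.
move=> two; split=> -[Mu H]; split=> //.
  move=> a b i j; case: (ltngtP a b) => [ab|ba|/val_inj <-].
  - move: (H i j (pairw a b)); rewrite sorted_pairw (ltnW ab) => /(_ isT).
    rewrite !act_coef_pairw_lt // !pairw_fst !pairw_snd => E.
    by apply: (eq_of_subr_scaled (e := 1) _ E); ring.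
  - move: (H i j (pairw b a)); rewrite sorted_pairw (ltnW ba) => /(_ isT).
    rewrite !act_coef_pairw_lt // !pairw_fst !pairw_snd => E.
    have pba : p b a = (p a b)^-1 by apply: (mulfI (p_neq0 a b)); rewrite p_mulC mulfV.
    rewrite pba in E *; apply: (eq_of_subr_scaled (e := p a b) _ E).
    by field; apply: p_neq0.
  - move: (H i j (pairw a a)); rewrite sorted_pairw leqnn => /(_ isT).
    rewrite !act_coef_pairw_diag !pairw_fst !pairw_snd p_diag => E.
    by apply: (eq_of_subr_scaled (e := 2) _ E); ring.
move=> i j w; rewrite [w]pairwE sorted_pairw leq_eqVlt.
move: (w i0) (w i1) => a b /orP[/eqP/val_inj <-|ab].
  rewrite !act_coef_pairw_diag !pairw_fst !pairw_snd.
  move: (H a a i j); rewrite p_diag => E.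
  by apply: (eq_of_subr_scaled (e := 2^-1) _ E); field.
rewrite !act_coef_pairw_lt // !pairw_fst !pairw_snd.
by apply: (eq_of_subr_scaled (e := 1) _ (H a b i j)); ring.
Qed.

Lemma block_aut_identity (M : 'M[k]_n) :
  (forall i j, M i j != 0 -> in_block p i j) -> aut_identity p M.
Proof.
move=> blockM a b i j.
have -> : M a j * M b i * (1 - p i j * p a b) = 0.
  have [->|/blockM aj] := eqVneq (M a j) 0; first by rewrite !mul0r.
  have [->|/blockM bi] := eqVneq (M b i) 0; first by rewrite mulr0 mul0r.
  by rewrite aj -(bi j) p_mulC subrr mulr0.
have [->|/blockM bj] := eqVneq (M b j) 0; first by rewrite !mul0r.
have [->|/blockM ai] := eqVneq (M a i) 0; first by rewrite mulr0 mul0r.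
have pib : p i b = p i j by apply: (mulIf (p_neq0 j i)); rewrite p_mulC -bj p_mulC.
by rewrite ai pib subrr mulr0.
Qed.

Lemma aut_identity_row (M : 'M[k]_n) (a i j : 'I_n) : (2 : k) != 0 ->
  aut_identity p M -> M a i != 0 -> M a j != 0 -> p i j = 1.
Proof.
move=> two autM ai aj; move: (autM a a i j); rewrite p_diag mulr1 => E.
have : M a j * M a i * (1 - p i j) * 2 = 0 by apply: (eq_of_subr_scaled (e := 1) _ E); ring.
by move/eqP; rewrite !mulf_eq0 (negbTE two) (negbTE ai) (negbTE aj) subr_eq0 orbF => /eqP.
Qed.

Lemma aut_identity_sym (M : 'M[k]_n) (i j : 'I_n) :
  aut_identity p M -> M i j != 0 -> M j i != 0 -> p i j = p j i.
Proof.
move=> autM ij ji; move: (autM j i i j); rewrite p_mulC subrr mulr0 => /esym/eqP.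
by rewrite !mulf_eq0 (negbTE ij) (negbTE ji) subr_eq0 => /eqP.
Qed.

End AutomorphismIdentity.

Section TraceDegreeTwo.

Variables (k : fieldType) (n : nat).

Lemma sum_le_split (g : 'I_n -> 'I_n -> k) :
  \sum_(a : 'I_n) \sum_(b : 'I_n | (a <= b)%N) g a b =
  \sum_(a : 'I_n) \sum_(b : 'I_n | (a < b)%N) g a b + \sum_(a : 'I_n) g a a.
Proof.
rewrite -big_split; apply: eq_bigr => a _ /=.
rewrite (bigD1 a) ?leqnn //= addrC; congr (_ + _).
by apply: eq_bigl => b; rewrite ltn_neqAle andbC eq_sym.
Qed.

Lemma sum_le_sym (g : 'I_n -> 'I_n -> k) : (forall a b, g a b = g b a) ->
  (\sum_(a : 'I_n) \sum_(b : 'I_n | (a <= b)%N) g a b) *+ 2 =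
  \sum_(a : 'I_n) \sum_(b : 'I_n) g a b + \sum_(a : 'I_n) g a a.
Proof.
move=> gC; rewrite mulr2n {2}(exchange_big_dep xpredT) //= -!big_split.
apply: eq_bigr => a _ /=.
rewrite (bigID (fun b : 'I_n => (a <= b)%N) xpredT) /= -addrA; congr (_ + _).
rewrite (bigD1 a) ?leqnn //= addrC; congr (_ + _).
by apply: eq_big => [b|b _]; [rewrite -ltnNge ltn_neqAle andbC | exact: gC].
Qed.

Lemma trace_deg2 (p M : 'M[k]_n) : trace_deg p M 2 =
  \sum_(a : 'I_n) \sum_(b : 'I_n | (a <= b)%N) M a a * M b b +
  \sum_(a : 'I_n) \sum_(b : 'I_n | (a < b)%N) p a b * (M b a * M a b).
Proof.
rewrite /trace_deg sum_sorted_word2 !sum_le_split [RHS]addrAC; congr (_ + _).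
  rewrite -big_split; apply: eq_bigr => a _; rewrite -big_split; apply: eq_bigr => b ab.
  by rewrite act_coef_pairw_lt // pairw_fst pairw_snd.
by apply: eq_bigr => a _; rewrite act_coef_pairw_diag pairw_fst pairw_snd.
Qed.

Lemma qr_series_coef2 (lam : k) : (2 <= n)%N ->
  qr_series_coef n lam 2 *+ 2 = (n * n.-1)%:R + lam *+ 2 * n.-1%:R + lam ^+ 2 *+ 2.
Proof.
case: n => [|[|m]] // _.
rewrite /qr_series_coef !big_ord_recr big_ord0 /= !subn0 !subSS subn0 add0r.
rewrite (_ : (2 - 1 + m = m.+1)%N) // (_ : (2 - 2 + m = m)%N) // binSn binn.
have Cm : ('C(2 + m, m) * 2 = m.+2 * m.+1)%N.
  by rewrite -(bin_sub (leq_addl 2 m)) addnK (bin_ffact _ 2) ffactnS ffactn1.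
rewrite -Cm natrM; ring.
Qed.

End TraceDegreeTwo.

Lemma sum_neq0_exists (k : fieldType) (I : finType) (P : pred I) (F : I -> k) :
  \sum_(i | P i) F i != 0 -> exists2 i, P i & F i != 0.
Proof.
move=> S; have [i /andP[Pi Fi]|none] := pickP (fun i => P i && (F i != 0)); first by exists i.
by rewrite big1 ?eqxx // in S => i Pi; move: (none i); rewrite /= Pi => /negbFE/eqP.
Qed.

Lemma sum_zero_or_const_eq0 (k : fieldType) (I : finType) (P : pred I) (t : I -> k) (g : k) :
  [pchar k] =i pred0 -> g != 0 -> (forall i, P i -> t i = 0 \/ t i = g) ->
  \sum_(i | P i) t i = 0 -> forall i, P i -> t i = 0.
Proof.
move=> chark g0 tP S.
have : \sum_(i | P i) t i = g * (\sum_(i | P i) ((t i != 0%R) : nat))%:R.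
  rewrite natr_sum mulr_sumr; apply: eq_bigr => i Pi.
  by case: (tP i Pi) => ->; rewrite ?eqxx ?mulr0 // g0 mulr1.
rewrite S => /esym/eqP; rewrite mulf_eq0 (negbTE g0) ((pcharf0P k).1 chark) sum_nat_eq0.
by move=> /= /forall_inP H i /H; case: (t i =P 0).
Qed.

Definition rank_one_update (k : fieldType) (n : nat) (c : k) (y f : 'I_n -> k) : 'M[k]_n :=
  \matrix_(a, b) ((a == b)%:R + c * (y a * f b)).

Section ReflectionBasis.

Variables (k : fieldType) (n : nat) (y f : 'I_n -> k) (s : 'I_n).
Hypotheses (fy : \sum_a y a * f a = 1) (fs : f s != 0).

(* Columns: y in position s, and e_b - (f_b / f_s) e_s for b != s, which span the kernel of f. *)
Definition refl_basis : 'M[k]_n :=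
  \matrix_(a, b) if b == s then y a else (a == b)%:R - (a == s)%:R * (f b / f s).

Definition refl_cobasis : 'M[k]_n :=
  \matrix_(a, b) if a == s then f b else (a == b)%:R - y a * f b.

Lemma sum_mul_refl_basis (w : 'I_n -> k) b : b != s ->
  \sum_a w a * refl_basis a b = w b - w s * (f b / f s).
Proof.
move=> bs; rewrite (eq_bigr (fun a =>
    (if a == b then w a else 0) - (if a == s then w a * (f b / f s) else 0))).
  by rewrite sumrB -!big_mkcond !big_pred1_eq.
move=> a _; rewrite mxE (negbTE bs).
by case: (a == b); case: (a == s); rewrite /= ?mulr1n ?mulr0n; ring.
Qed.

Lemma sum_f_refl_basis b : \sum_a f a * refl_basis a b = (b == s)%:R.
Proof.
have [->|bs] := eqVneq b s; last by rewrite sum_mul_refl_basis // mulrCA mulfV // mulr1 subrr.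
by rewrite -fy; apply: eq_bigr => a _; rewrite mxE eqxx mulrC.
Qed.

Lemma refl_cobasisK : refl_cobasis *m refl_basis = 1%:M.
Proof.
apply/matrixP => a b; rewrite !mxE.
under eq_bigr do rewrite [refl_cobasis _ _]mxE.
have [->|a_s] := eqVneq a s; first by rewrite sum_f_refl_basis eq_sym.
rewrite (eq_bigr (fun x => (if x == a then refl_basis x b else 0) - y a * (f x * refl_basis x b))).
  rewrite sumrB -big_mkcond big_pred1_eq -mulr_sumr sum_f_refl_basis mxE.
  have [->|bs] := eqVneq b s; first by rewrite (negbTE a_s) mulr1 subrr.
  by rewrite (negbTE a_s) mul0r mulr0 !subr0.
move=> x _; rewrite mulrBl mulrA eq_sym; congr (_ - _).
by case: (x == a); rewrite ?mul1r ?mul0r.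
Qed.

Lemma refl_basis_unit : refl_basis \in unitmx.
Proof. by case: (mulmx1_unit refl_cobasisK). Qed.

Lemma rank_one_update_refl_basis c :
  rank_one_update c y f *m refl_basis = refl_basis *m std_refl s (1 + c).
Proof.
apply/matrixP => a b; rewrite mul_mx_diag !mxE.
rewrite (eq_bigr (fun x =>
    (if x == a then refl_basis x b else 0) + c * y a * (f x * refl_basis x b))).
  rewrite big_split /= -big_mkcond big_pred1_eq -mulr_sumr sum_f_refl_basis.
  rewrite [refl_basis a b]mxE; have [_|bs] := eqVneq b s; first by rewrite mulr1; ring.
  by rewrite mulr0 addr0 mulr1.
move=> x _; rewrite [rank_one_update _ _ _ _ _]mxE eq_sym.
by case: (x == a); rewrite /= ?mulr1n ?mulr0n; ring.
Qed.

Lemma refl_basis_support a b : refl_basis a b != 0 ->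
  a = b \/ ((y a != 0) || (f a != 0)) /\ ((y b != 0) || (f b != 0)).
Proof.
rewrite mxE; have [-> ya|bs] := eqVneq b s; first by right; rewrite ya fs orbT.
have [->|_] := eqVneq a b; first by left.
rewrite /= mulr0n sub0r oppr_eq0; have [->|_] := eqVneq a s; last by rewrite mulr0n mul0r eqxx.
rewrite mulr1n mul1r mulf_eq0 invr_eq0 (negbTE fs) orbF => fb.
by right; rewrite fb !orbT.
Qed.

End ReflectionBasis.

Section RankOneUpdate.

Variables (k : fieldType) (n : nat) (p : 'M[k]_n) (c : k) (y f : 'I_n -> k).
Hypotheses (chark : [pchar k] =i pred0) (c0 : c != 0).
Hypothesis fy : \sum_a y a * f a = 1.

Let two : (2 : k) != 0. Proof. by rewrite ((pcharf0P k).1 chark). Qed.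
Local Notation u a := (y a * f a).
Let M := rank_one_update c y f.

Lemma rank_one_update_diag a : M a a = 1 + c * u a.
Proof. by rewrite mxE eqxx. Qed.

Lemma rank_one_update_offdiag a b : a != b -> M a b = c * (y a * f b).
Proof. by move=> ab; rewrite mxE (negbTE ab) add0r. Qed.

Lemma rank_one_trace2_constraint : (2 <= n)%N ->
  trace_deg p M 2 = qr_series_coef n (1 + c) 2 ->
  \sum_(a : 'I_n) \sum_(b : 'I_n | (a < b)%N) (1 - p a b) * (u a * u b) = 0.
Proof.
move=> n2 trM.
set U := \sum_(a : 'I_n) \sum_(b : 'I_n | (a < b)%N) u a * u b.
set P := \sum_(a : 'I_n) \sum_(b : 'I_n | (a < b)%N) p a b * (u a * u b).
set Sq := \sum_(a : 'I_n) u a * u a.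
have sumu : \sum_a u a = 1 by [].
have U2 : U *+ 2 + Sq = 1.
  have := sum_le_sym (fun a b => mulrC (u a) (u b)).
  rewrite sum_le_split mulrnDl -/U -/Sq -big_distrlr /=.
  by rewrite sumu mulr1 mulr2n addrA => /addIr.
have trM2 : trace_deg p M 2 *+ 2 =
    (n%:R + c) ^+ 2 + (n%:R + c *+ 2 + c ^+ 2 * Sq) + (c ^+ 2 * P) *+ 2.
  rewrite trace_deg2 mulrnDl (sum_le_sym (fun a b => mulrC (M a a) (M b b))).
  have sumM : \sum_a M a a = n%:R + c.
    rewrite (eq_bigr _ (fun a _ => rank_one_update_diag a)) big_split /=.
    by rewrite -mulr_sumr sumu mulr1 sumr_const card_ord.
  rewrite -big_distrlr /= sumM -expr2; congr (_ + _ + _ *+ 2).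
    rewrite (eq_bigr (fun a => 1 + c *+ 2 * u a + c ^+ 2 * (u a * u a))) => [|a _].
      by rewrite !big_split /= -!mulr_sumr sumu sumr_const card_ord mulr1.
    by rewrite rank_one_update_diag; ring.
  rewrite /P mulr_sumr; apply: eq_bigr => a _; rewrite mulr_sumr; apply: eq_bigr => b ab.
  have ab' : a != b by rewrite neq_ltn ab.
  have ba' : b != a by rewrite neq_ltn ab orbT.
  by rewrite !rank_one_update_offdiag //; ring.
have hn : n%:R = n.-1%:R + 1 :> k by rewrite natr1 prednK // ltnW.
have Sq_U : Sq = 1 - U *+ 2 by rewrite -U2 addrAC subrr add0r.
have : (c ^+ 2 *+ 2) * (U - P) = 0.
  move: trM2; rewrite trM qr_series_coef2 // natrM Sq_U hn => E.
  by apply: (eq_of_subr_scaled (e := 1) _ E); ring.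
move/eqP; rewrite mulf_eq0 -mulr_natr mulf_eq0 expf_eq0 (negbTE c0) (negbTE two) /=.
rewrite subr_eq0 => /eqP UP; rewrite -[RHS](subrr P) -{1}UP -sumrB.
by apply: eq_bigr => a _; rewrite -sumrB; apply: eq_bigr => b _; rewrite mulrBl mul1r.
Qed.

Hypotheses (hp : skew_params p) (lam0 : 1 + c != 0) (autT : is_aut p M).

Let p_neq0 : forall i j, p i j != 0 := hp.1.
Let p_diag : forall i, p i i = 1 := hp.2.1.
Let p_mulC : forall i j, p i j * p j i = 1 := hp.2.2.
Let autM : aut_identity p M := ((is_autP hp M two).1 autT).2.

Lemma rank_one_update_neq0 a b : a != b -> y a != 0 -> f b != 0 -> M a b != 0.
Proof. by move=> ab ya fb; rewrite rank_one_update_offdiag // !mulf_neq0. Qed.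

Lemma rank_one_diag_eq0_or_commute s t :
  y s != 0 -> f t != 0 -> M s s = 0 \/ p s t = 1.
Proof.
move=> ys ft; have [-> | st] := eqVneq s t; first by right.
have [|Ms] := eqVneq (M s s) 0; first by left.
by right; apply: (aut_identity_row hp two autM Ms); apply: rank_one_update_neq0.
Qed.

Lemma rank_one_diag_eq0 s : M s s = 0 -> c * u s = -1.
Proof. by rewrite rank_one_update_diag => /eqP; rewrite addrC addr_eq0 => /eqP. Qed.

Lemma rank_one_aut_identity3 i j b : i != j -> i != b -> j != b ->
  y b != 0 -> f j != 0 ->
  c * u i * (1 - p i j * p i b) = (1 + c * u i) * (p i j - p i b).
Proof.
move=> ij ib jb yb fj.
have bj : b != j by rewrite eq_sym.
have bi : b != i by rewrite eq_sym.
apply: (mulfI (rank_one_update_neq0 bj yb fj)); move: (autM i b i j).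
rewrite rank_one_update_diag !(rank_one_update_offdiag ij, rank_one_update_offdiag bi).
rewrite (rank_one_update_offdiag bj) => E.
by apply: (eq_of_subr_scaled (e := 1) _ E); ring.
Qed.

Lemma weight_neq0 a : u a != 0 -> y a != 0 /\ f a != 0.
Proof. by rewrite mulf_eq0 negb_or => /andP. Qed.

Lemma noncommuting_weights a b : a != b -> u a != 0 -> u b != 0 -> p a b != 1 ->
  p a b = -1 /\ c * u a = -1 /\ c * u b = -1.
Proof.
move=> ab /weight_neq0[ya fa] /weight_neq0[yb fb] pab.
have ba : b != a by rewrite eq_sym.
have Maa : M a a = 0.
  by case: (rank_one_diag_eq0_or_commute ya fb) => // /eqP; rewrite (negbTE pab).
have Mbb : M b b = 0.
  by case: (rank_one_diag_eq0_or_commute yb fa) => // /(skew_eq1_sym hp)/eqP; rewrite (negbTE pab).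
split; last by split; apply: rank_one_diag_eq0.
have pC : p a b = p b a.
  by apply: (aut_identity_sym hp autM); apply: rank_one_update_neq0.
have : p a b ^+ 2 == 1 by rewrite expr2 {2}pC p_mulC.
by rewrite sqrf_eq1 (negbTE pab) => /eqP.
Qed.

Hypotheses (n2 : (2 <= n)%N) (trM : trace_deg p M 2 = qr_series_coef n (1 + c) 2).

(* Over pairs a < b the terms (1 - p_ab) u_a u_b are 0 or 2 / c^2, and they sum to 0,
   so in characteristic 0 they all vanish. *)
Lemma weight_commute a b : u a != 0 -> u b != 0 -> p a b = 1.
Proof.
wlog ab : a b / (a < b)%N.
  move=> H ua ub; case: (ltngtP a b) => [ab|ba|/val_inj ->]; first exact: H.
    exact/(skew_eq1_sym hp)/H.
  exact: p_diag.
move=> ua ub; pose t (xy : 'I_n * 'I_n) := (1 - p xy.1 xy.2) * (u xy.1 * u xy.2).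
have g0 : 2 / c ^+ 2 != 0 by rewrite mulf_neq0 ?invr_eq0 ?expf_neq0.
have t0g (xy : 'I_n * 'I_n) : (xy.1 < xy.2)%N -> t xy = 0 \/ t xy = 2 / c ^+ 2.
  case: xy => a' b' /= ab'; rewrite /t /=.
  have [->|ua'] := eqVneq (u a') 0; first by left; rewrite mul0r mulr0.
  have [->|ub'] := eqVneq (u b') 0; first by left; rewrite !mulr0.
  have [->|pab'] := eqVneq (p a' b') 1; first by left; rewrite subrr mul0r.
  have [pm [ea eb]] := noncommuting_weights (negbT (ltn_eqF ab')) ua' ub' pab'.
  right; apply: (mulIf (expf_neq0 2 c0)); rewrite mulfVK ?expf_neq0 // pm.
  by transitivity (2 * ((c * u a') * (c * u b'))); [ring | rewrite ea eb; ring].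
have sum_t : \sum_(xy : 'I_n * 'I_n | (xy.1 < xy.2)%N) t xy = 0.
  rewrite -(pair_big_dep xpredT (fun a b : 'I_n => (a < b)%N) (fun a b => t (a, b))).
  exact: rank_one_trace2_constraint.
move/eqP: (sum_zero_or_const_eq0 chark g0 t0g sum_t (i := (a, b)) ab).
by rewrite /t mulf_eq0 (negbTE (mulf_neq0 ua ub)) orbF subr_eq0 eq_sym => /eqP.
Qed.

Lemma exists_weight_neq0 : exists s, u s != 0.
Proof.
have : \sum_a u a != 0 by rewrite fy oner_neq0.
by case/sum_neq0_exists => s _ us; exists s.
Qed.

Lemma commute_row_col s t : y s != 0 -> f t != 0 -> p s t = 1.
Proof.
move=> ys ft; have [<-|st] := eqVneq s t; first exact: p_diag.
case: (rank_one_diag_eq0_or_commute ys ft) => [/rank_one_diag_eq0 cus|//].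
have us : u s != 0 by apply: contra_eq_neq cus => ->; rewrite mulr0 eq_sym oppr_eq0 oner_eq0.
have [t' t's ut'] : exists2 t', t' != s & u t' != 0.
  apply: sum_neq0_exists; apply: contra_neq lam0 => rest0.
  have us1 : u s = 1 by move: fy; rewrite (bigD1 s) //= rest0 addr0.
  by apply/eqP; rewrite addrC addr_eq0 -cus us1 mulr1.
have [->|tt'] := eqVneq t t'; first exact: weight_commute.
have st' : s != t' by rewrite eq_sym.
have [yt' _] := weight_neq0 ut'.
move: (rank_one_aut_identity3 st st' tt' yt' ft).
rewrite cus (weight_commute us ut') mulr1 addrN mul0r mulN1r => /eqP.
by rewrite oppr_eq0 subr_eq0 eq_sym => /eqP.
Qed.

Lemma zero_weight_commute_eq i j b : i != j -> i != b -> j != b ->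
  y b != 0 -> f j != 0 -> u i = 0 -> p i j = p i b.
Proof.
move=> ij ib jb yb fj ui; move: (rank_one_aut_identity3 ij ib jb yb fj).
by rewrite ui mulr0 mul0r addr0 mul1r => /esym/eqP; rewrite subr_eq0 => /eqP.
Qed.

Lemma row_support_commute a b : y a != 0 -> y b != 0 -> p a b = 1.
Proof.
move=> ya yb; have [<-|ab] := eqVneq a b; first exact: p_diag.
have [fa0|fa] := eqVneq (f a) 0; last exact/(skew_eq1_sym hp)/commute_row_col.
have [fb0|fb] := eqVneq (f b) 0; last exact: commute_row_col.
have [s0 /weight_neq0[ys0 fs0]] := exists_weight_neq0.
have as0 : a != s0 by apply: contra_eq_neq fa0 => ->.
have bs0 : s0 != b by apply: contra_neq fs0 => ->.
rewrite -(zero_weight_commute_eq as0 ab bs0 yb fs0) ?commute_row_col //.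
by rewrite fa0 mulr0.
Qed.

Lemma col_support_commute a b : f a != 0 -> f b != 0 -> p a b = 1.
Proof.
move=> fa fb; have [<-|ab] := eqVneq a b; first exact: p_diag.
have [ya0|ya] := eqVneq (y a) 0; last exact: commute_row_col.
have [yb0|yb] := eqVneq (y b) 0; last exact/(skew_eq1_sym hp)/commute_row_col.
have [s0 /weight_neq0[ys0 _]] := exists_weight_neq0.
have s0a : s0 != a by apply: contra_neq ys0 => ->.
have s0b : s0 != b by apply: contra_neq ys0 => ->.
by apply: (aut_identity_row hp two autM (a := s0)); apply: rank_one_update_neq0.
Qed.

Lemma support_commute a b : (y a != 0) || (f a != 0) -> (y b != 0) || (f b != 0) -> p a b = 1.
Proof.
case/orP=> [ya|fa] /orP[yb|fb].
- exact: row_support_commute.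
- exact: commute_row_col.
- exact/(skew_eq1_sym hp)/commute_row_col.
- exact: col_support_commute.
Qed.

Lemma off_support_commute_eq l a b : y l = 0 -> f l = 0 ->
  (y a != 0) || (f a != 0) -> (y b != 0) || (f b != 0) -> p l a = p l b.
Proof.
move=> yl0 fl0; have [s0 /weight_neq0[ys0 fs0]] := exists_weight_neq0.
have ul : u l = 0 by rewrite yl0 mul0r.
have ls0 : l != s0 by apply: contra_eq_neq yl0 => ->.
suff eq_s0 x : (y x != 0) || (f x != 0) -> p l x = p l s0.
  by move=> /eq_s0 -> /eq_s0 ->.
have [-> //|xs0] := eqVneq x s0.
have lx : (y x != 0) || (f x != 0) -> l != x by apply: contraTneq => <-; rewrite yl0 fl0 eqxx.
case/orP=> [yx|fx].
- by rewrite (zero_weight_commute_eq ls0 (lx _) _ yx fs0 ul) ?yx // eq_sym.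
- by rewrite (zero_weight_commute_eq (lx _) ls0 xs0 ys0 fx ul) ?fx ?orbT.
Qed.

Lemma support_in_block a b :
  (y a != 0) || (f a != 0) -> (y b != 0) || (f b != 0) -> in_block p a b.
Proof.
move=> Sa Sb l; have [Sl|] := boolP ((y l != 0) || (f l != 0)).
  by rewrite !support_commute.
rewrite negb_or !negbK => /andP[/eqP yl0 /eqP fl0].
apply: (mulIf (p_neq0 l a)); rewrite p_mulC (off_support_commute_eq yl0 fl0 Sa Sb).
by rewrite p_mulC.
Qed.

Lemma elementary_refl_basis s : f s != 0 -> elementary p (refl_basis y f s).
Proof.
move=> fs; have G_block a b : refl_basis y f s a b != 0 -> in_block p a b.
  by case/(refl_basis_support fs) => [-> l //|[Sa Sb]]; apply: support_in_block.
split=> //; apply/(is_autP hp _ two); split; first exact: refl_basis_unit.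
exact: block_aut_identity.
Qed.

End RankOneUpdate.

Section StandardReflection.

Variables (k : fieldType) (n : nat) (s : 'I_n) (lam : k).

Lemma det_std_refl : \det (std_refl s lam) = lam.
Proof.
rewrite det_diag (bigD1 s) //= big1 ?mxE ?eqxx ?mulr1 // => i /negbTE i_s.
by rewrite mxE i_s.
Qed.

Lemma col_row_invmx_dot (P : 'M[k]_n) : P \in unitmx -> \sum_a P a s * invmx P s a = 1.
Proof.
move/mulVmx/matrixP/(_ s s); rewrite !mxE eqxx mulr1n => <-.
by apply: eq_bigr => a _; rewrite mulrC.
Qed.

Lemma conj_std_refl (P : 'M[k]_n) : P \in unitmx ->
  P *m std_refl s lam *m invmx P =
  rank_one_update (lam - 1) (fun a => P a s) (fun b => invmx P s b).
Proof.
move=> Pu; apply/matrixP => a b; rewrite !mxE.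
rewrite (eq_bigr (fun x => P a x * invmx P x b +
    (if x == s then (lam - 1) * (P a s * invmx P s b) else 0))) => [|x _].
  rewrite big_split /= -big_mkcond big_pred1_eq.
  by move/mulmxV/matrixP/(_ a b): Pu; rewrite !mxE => ->.
rewrite mul_mx_diag !mxE; case: eqVneq => [->|_]; first ring.
by rewrite mulr1 addr0.
Qed.

End StandardReflection.

Lemma reflection_rank_one_update (k : fieldType) (n : nat) (p T : 'M[k]_n) :
  (0 < n)%N -> is_reflection p T ->
  exists c (y f : 'I_n -> k), [/\ c != 0, 1 + c != 0, \sum_a y a * f a = 1,
    T = rank_one_update c y f & quasi_reflection_with p T (1 + c)].
Proof.
move=> n0 [lam [qrT [_ [P [Pu TP]]]]].
have last_lt_n : (n.-1 < n)%N by rewrite ltn_predL.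
(* The diagonal matrix in [is_reflection] is [std_refl] at the last index, by conversion. *)
have TE : T = P *m std_refl (Ordinal last_lt_n) lam *m invmx P by rewrite -TP mulmxK.
exists (lam - 1), (P^~ (Ordinal last_lt_n)), (invmx P (Ordinal last_lt_n)).
rewrite subrKC; split=> //.
- by rewrite subr_eq0; case: qrT => _ [].
- case: qrT => -[+ _] _; rewrite TE !unitmx_mul unitmx_inv Pu andbT unitmxE.
  by rewrite det_std_refl unitfE.
- exact: col_row_invmx_dot.
- by rewrite TE conj_std_refl.
Qed.

Theorem proposition2p6 (k : closedFieldType) (n : nat) (p : 'M[k]_n) (T : 'M[k]_n) :
  [pchar k] =i pred0 -> (2 <= n)%N -> skew_params p -> is_reflection p T ->
  exists (G : 'M[k]_n) (i : 'I_n) (lam : k),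
    elementary p G /\ lam != 0 /\ lam != 1 /\
    invmx G *m T *m G = std_refl i lam.
Proof.
move=> chark n2 hp /(reflection_rank_one_update (ltnW n2)).
case=> c [y [f [c0 lam0 fy -> [autT [_ trT]]]]].
have [s /weight_neq0[_ fs]] := exists_weight_neq0 fy.
exists (refl_basis y f s), s, (1 + c); split.
  exact: (elementary_refl_basis chark c0 fy hp lam0 autT n2 (trT 2)).
split=> //; split; first by rewrite -subr_eq0 addrC addKr.
by rewrite -mulmxA rank_one_update_refl_basis // mulmxA mulVmx ?mul1mx ?refl_basis_unit.
Qed.
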